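(* Consider the following communication system. A $k$-bit binary information sequence is CRC-encoded with degree-$m$ generator polynomial $p(x)$ into an $n=k+m$ bit sequence divisible by $p(x)$, which (with $v$ zero termination bits) is encoded by a feedforward rate-$1/N$ convolutional code with $v$ memory elements and sent by QPSK over an AWGN channel with symbol SNR $\gamma_s=E_s/N_0$. The receiver uses serial list Viterbi decoding (S-LVA): codewords are output in order of increasing soft Viterbi metric relative to the received sequence, and decoding stops at the first codeword whose input sequence is divisible by $p(x)$. Let $N_{\mathrm{LVA}}$ be the index of the decoding trial at which the CRC check first passes, and for a list size $L$ let $P^{L}_{\mathrm{NACK}}=\Pr\{N_{\mathrm{LVA}}>L\}$ be the erasure probability (no codeword among the first $L$ passes the CRC). Then, as $\gamma_s\to\infty$, $P^{L}_{\mathrm{NACK}}\le \frac{1}{L}$ (i.e., $\limsup_{\gamma_s\to\infty}P^L_{\mathrm{NACK}}\le 1/L$).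
   Context: $\gamma_s$ is measured in dB; $\gamma_s\to\infty$ means the SNR tends to infinity. Probabilities are over the channel noise. *)

From HB Require Import structures.
From mathcomp Require Import all_boot all_order all_algebra.
From mathcomp Require Import all_classical all_reals all_analysis.
Set Implicit Arguments. Unset Strict Implicit. Unset Printing Implicit Defensive.
Import Order.TTheory GRing.Theory Num.Theory.
Local Open Scope classical_set_scope.
Local Open Scope ring_scope.

Definition bits_poly (n : nat) (u : 'I_n -> bool) : {poly 'F_2} :=
  \sum_(i < n) ((u i : nat)%:R *: 'X^i).

Definition crc_ok (p : {poly 'F_2}) (n : nat) (u : 'I_n -> bool) : bool :=
  p %| bits_poly u.

(* ---------- Feedforward rate-1/N convolutional encoder ----------
   g j i = tap of generator polynomial j on delay i (i = 0..v), i.e. a single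
   shift register with v memory elements. The n input bits are followed by v
   zero termination bits; output bit j at time t (t < n+v) is
   XOR_{i <= min(t,v)} g_j[i] * u'(t - i), with u' the zero-terminated input. *)
Definition term_input (n : nat) (u : 'I_n -> bool) (t : nat) : bool :=
  match insub t with Some i => u i | None => false end.

Definition conv_out (N n v : nat) (g : 'I_N -> 'I_v.+1 -> bool)
    (u : 'I_n -> bool) (t : 'I_(n + v)) (j : 'I_N) : bool :=
  \big[addb/false]_(i < v.+1 | (i <= t)%N) (g j i && term_input u (t - i)%N).

(* ---------- QPSK (Gray) over AWGN ----------
   Gray-mapped QPSK = BPSK on each of the I and Q components; with N0 = 1 and
   symbol energy Es = gamma (linear), each coded bit c is sent as the real
   amplitude sqrt(gamma/2) * (1 - 2c) and receives real Gaussian noise of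
   variance N0/2 = 1/2. *)
Definition bpsk {R : realType} (c : bool) : R := if c then -1 else 1.

Definition snr_lin {R : realType} (gamma_dB : R) : R := powR 10 (gamma_dB / 10).

Definition amp {R : realType} (gamma_dB : R) : R := Num.sqrt (snr_lin gamma_dB / 2).

Definition received {R : realType} (N n v : nat) (g : 'I_N -> 'I_v.+1 -> bool)
    (gamma_dB : R) (x : 'I_n -> bool) (w : 'I_(n + v) * 'I_N -> R)
    (t : 'I_(n + v)) (j : 'I_N) : R :=
  amp gamma_dB * bpsk (conv_out g x t j) + w (t, j).

Definition metric {R : realType} (N n v : nat) (g : 'I_N -> 'I_v.+1 -> bool)
    (gamma_dB : R) (r : 'I_(n + v) -> 'I_N -> R) (u : 'I_n -> bool) : R :=
  \sum_(t < n + v) \sum_(j < N) (r t j - amp gamma_dB * bpsk (conv_out g u t j)) ^+ 2.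

(* ---------- Serial list Viterbi decoding ----------
   Candidates (input sequences, i.e. trellis paths) are output in order of
   increasing metric; N_LVA is the index of the first one passing the CRC,
   i.e. 1 + the number of CRC-failing candidates listed before the best
   CRC-passing one. Ties (a probability-zero event) are broken pessimistically:
   a CRC-failing candidate with metric equal to the best CRC-passing metric
   is listed first. *)
Definition N_LVA {R : realType} (N n v : nat) (g : 'I_N -> 'I_v.+1 -> bool)
    (p : {poly 'F_2}) (gamma_dB : R) (r : 'I_(n + v) -> 'I_N -> R) : nat :=
  (#|[set u : {ffun 'I_n -> bool} | ~~ crc_ok p u &&
      [forall u' : {ffun 'I_n -> bool},
         crc_ok p u' ==> (metric g gamma_dB r u <= metric g gamma_dB r u')]]|).+1.

Definition mutually_independent {R : realType} d (T : measurableType d)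
    (P : probability T R) (I : finType) (X : I -> T -> R) : Prop :=
  forall (J : {set I}) (B : I -> set R), (forall i, measurable (B i)) ->
    P [set t | forall i, i \in J -> B i (X i t)] =
    (\prod_(i in J) P (X i @^-1` B i))%E.

(* The erasure probability in fact tends to 0.  When every noise sample is
   smaller in modulus than the BPSK amplitude, the transmitted input has a
   strictly smaller soft metric than every input with a different codeword;
   a feedforward encoder with a nonzero tap is injective and the transmitted
   input passes the CRC, so N_LVA = 1.  The amplitude grows without bound
   with the SNR, while by continuity from above of the probability, the chance
   that one of the finitely many noise samples exceeds a level M vanishes as
   M grows. *)
From HB Require Import structures.
From mathcomp Require Import all_boot all_order all_algebra.
From mathcomp Require Import all_classical all_reals all_analysis.
From mathcomp Require Import lra zify.
Import Order.TTheory GRing.Theory Num.Theory.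
Local Open Scope classical_set_scope.
Local Open Scope ring_scope.

Lemma measurable_fin_bool_comb {d} {T : measurableType d} {I : finType}
    (b : I -> T -> bool) (Phi : {ffun I -> bool} -> bool) :
  (forall i, measurable_fun setT (b i)) ->
  measurable [set t | Phi [ffun i => b i t]].
Proof.
move=> mb.
have -> : [set t | Phi [ffun i => b i t]] =
    \bigcup_(f in [set f | Phi f]) \bigcap_(i in setT) (b i @^-1` [set f i]).
  apply/seteqP; split => [t Pt|t [f Pf bf]] /=.
    by exists [ffun i => b i t] => // i _; rewrite /= ffunE.
  suff -> : [ffun i => b i t] = f by [].
  by apply/ffunP => i; rewrite ffunE; apply: bf.
apply: fin_bigcup_measurable finite_finset _ => f _.
apply: fin_bigcap_measurable finite_finset _ => i _.
by rewrite -[_ @^-1` _]setTI; apply: mb.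
Qed.

Lemma big_addb_cancel (I : finType) (P : pred I) (F G : I -> bool) (i0 : I) :
  P i0 -> (forall i, P i -> i != i0 -> F i = G i) ->
  \big[addb/false]_(i | P i) F i = \big[addb/false]_(i | P i) G i -> F i0 = G i0.
Proof.
move=> Pi0 FG; rewrite [LHS](bigD1 i0) // [RHS](bigD1 i0) //=.
by rewrite (eq_bigr G) => [/addIb|i /andP[]]; last exact: FG.
Qed.

Lemma term_inputE n (u : 'I_n -> bool) (i : 'I_n) : term_input u i = u i.
Proof. by rewrite /term_input valK. Qed.

Lemma term_input_out n (u : 'I_n -> bool) (s : nat) :
  (n <= s)%N -> term_input u s = false.
Proof. by move=> ns; rewrite /term_input insubF // ltnNge ns. Qed.

(* Strong induction on the time s: at time s + i0, with i0 the first nonzero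
   tap of some output, the only input bit that may still differ is bit s. *)
Lemma conv_out_inj (N n v : nat) (g : 'I_N -> 'I_v.+1 -> bool) (u x : 'I_n -> bool) :
  (exists j i, g j i) ->
  (forall t j, conv_out g u t j = conv_out g x t j) -> u =1 x.
Proof.
move=> [j [i1 gi1]] same_out.
case: (arg_minnP (fun i : 'I_v.+1 => val i) gi1) => i0 gi0 i0_min.
suff same_in s : term_input u s = term_input x s by move=> i; rewrite -!term_inputE.
elim/ltn_ind: s => s IH.
have [sn|ns] := ltnP s n; last by rewrite !term_input_out.
have t_lt : (s + i0 < n + v)%N by rewrite -addSn leq_add // -ltnS.
have := @big_addb_cancel _ _ _ _ i0 _ _ (same_out (Ordinal t_lt) j).
rewrite /= gi0 leq_addl addnK; apply => // i i_le_t /eqP/val_eqP/= i_neq.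
have [i_lt|i_gt] := ltnP i i0.
  suff -> : g j i = false by [].
  by apply/negbTE/negP => /i0_min; rewrite leqNgt i_lt.
by rewrite IH //; lia.
Qed.

Lemma bpsk_sqr_dist_leif (R : realType) (a w : R) (c c' : bool) : `|w| < a ->
  w ^+ 2 <= (a * bpsk c + w - a * bpsk c') ^+ 2 ?= iff (c == c').
Proof.
rewrite ltr_norml => /andP[lt_na lt_a].
have [->|neq_c] := eqVneq c c'.
  by rewrite addrAC subrr add0r; apply/leif_refl.
have -> : a * bpsk c + w - a * bpsk c' = w + (if c then - 2 * a else 2 * a).
  by move: neq_c; case: c; case: c' => //= _; rewrite /bpsk; lra.
have lt_dist : w ^+ 2 < (w + (if c then - 2 * a else 2 * a)) ^+ 2.
  by case: (c); nra.
by split; [exact: ltW | exact: lt_eqF].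
Qed.

Lemma amp_cvgy {R : realType} : @amp R x @[x --> +oo] --> +oo.
Proof.
apply/cvgryPge => A.
have ln10_gt0 : 0 < ln (10 : R) by apply: ln_gt0; rewrite ltr1n.
near=> gam.
(* 10 ^ (gam / 10) >= 1 + gam ln 10 / 10 >= 2 A ^ 2 *)
have gam_ge : 20 * A ^+ 2 <= gam * ln (10 : R).
  by rewrite -ler_pdivrMr //; near: gam; apply: nbhs_pinfty_ge; exact: num_real.
apply: le_trans (ler_norm A) _.
rewrite /amp /snr_lin -sqrtr_sqr ler_sqrt; last by rewrite divr_ge0 // ltW // powR_gt0.
rewrite /powR (negbTE (_ : (10 : R) != 0)) //.
have := expR_ge1Dx (gam / 10 * ln (10 : R)).
lra.
Unshelve. all: by end_near.
Qed.

Section Decoding.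
Variables (R : realType) (N n v : nat) (g : 'I_N -> 'I_v.+1 -> bool) (gam : R).

Lemma metric_received_leif (x u : 'I_n -> bool) {w : 'I_(n + v) * 'I_N -> R} :
  (forall ij, `|w ij| < amp gam) ->
  metric g gam (received g gam x w) x <= metric g gam (received g gam x w) u
    ?= iff [forall t, [forall j, conv_out g x t j == conv_out g u t j]].
Proof.
move=> w_small; rewrite /metric /received.
under eq_bigr do under eq_bigr do rewrite addrAC subrr add0r.
apply: leif_sum => t _; apply: leif_sum => j _.
exact: bpsk_sqr_dist_leif.
Qed.

Lemma N_LVA_received_small_noise (p : {poly 'F_2}) (x : 'I_n -> bool)
    (w : 'I_(n + v) * 'I_N -> R) :
  (exists j i, g j i) -> crc_ok p x -> (forall ij, `|w ij| < amp gam) ->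
  N_LVA g p gam (received g gam x w) = 1%N.
Proof.
move=> g_nz crc_x w_small; rewrite /N_LVA; congr _.+1.
apply: eq_card0 => u; apply/negP; rewrite in_setE /=.
move=> /andP[crc_u /forallP/(_ [ffun i => x i])].
have xfE : fun_of_fin [ffun i => x i] = x by apply/funext => i; rewrite ffunE.
rewrite xfE crc_x /= => le_ux.
have [le_xu] := metric_received_leif x u w_small.
rewrite eq_le le_ux le_xu => /esym/forallP same_out.
have /funext u_x : u =1 x.
  by apply: conv_out_inj g_nz _ => t j; apply/esym/eqP; move/forallP: (same_out t).
by move: crc_u; rewrite u_x crc_x.
Qed.

Variables (d : measure_display) (T : measurableType d).

Lemma measurable_metric (r : T -> 'I_(n + v) -> 'I_N -> R) (u : 'I_n -> bool) :
  (forall t j, measurable_fun setT (fun s => r s t j)) ->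
  measurable_fun setT (fun s => metric g gam (r s) u).
Proof.
move=> mr; apply: measurable_sum => t; apply: measurable_sum => j.
by apply/measurable_realfun.measurable_funX/measurable_realfun.measurable_funB.
Qed.

Lemma measurable_N_LVA (p : {poly 'F_2}) (r : T -> 'I_(n + v) -> 'I_N -> R)
    (Q : pred nat) :
  (forall t j, measurable_fun setT (fun s => r s t j)) ->
  measurable [set s | Q (N_LVA g p gam (r s))].
Proof.
move=> mr.
pose le_metric (uu : {ffun 'I_n -> bool} * {ffun 'I_n -> bool}) s :=
  metric g gam (r s) uu.1 <= metric g gam (r s) uu.2.
pose Phi (f : {ffun {ffun 'I_n -> bool} * {ffun 'I_n -> bool} -> bool}) :=
  Q (#|[set u : {ffun 'I_n -> bool} | ~~ crc_ok p u &&
         [forall u' : {ffun 'I_n -> bool}, crc_ok p u' ==> f (u, u')]]|).+1.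
rewrite (_ : [set s | _] = [set s | Phi [ffun uu => le_metric uu s]]).
  apply: measurable_fin_bool_comb => uu.
  by apply: measurable_realfun.measurable_fun_ler; exact: measurable_metric.
apply/funext => s; rewrite /Phi /N_LVA.
congr (Q (S #|in_set _|)); apply/funext => u /=.
by congr (_ && _); apply: eq_forallb => u'; rewrite ffunE.
Qed.

End Decoding.

Section LargeNoise.
Context {R : realType} {d : measure_display} {T : measurableType d}.
Context {K : finType} {X : K -> T -> R}.
Hypothesis mX : forall i, measurable_fun setT (X i).

Definition some_norm_ge (M : R) := [set t | exists i, M <= `|X i t|].

Lemma measurable_some_norm_ge M : measurable (some_norm_ge M).
Proof.
rewrite (_ : some_norm_ge M = [set t | [exists i, [ffun i => M <= `|X i t|] i]]).
  apply: (measurable_fin_bool_comb (fun i t => M <= `|X i t|) (fun f => [exists i, f i])).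
  move=> i; apply: measurable_realfun.measurable_fun_ler; first exact: measurable_cst.
  exact: measurableT_comp (@measurable_realfun.normr_measurable R _) (mX i).
apply/seteqP; split => t /=.
  by move=> [i Mi]; apply/existsP; exists i; rewrite ffunE.
by move=> /existsP[i]; rewrite ffunE; exists i.
Qed.

Lemma some_norm_ge_anti M M' : M <= M' -> some_norm_ge M' `<=` some_norm_ge M.
Proof. by move=> le_MM' t [i Mi]; exists i; apply: le_trans Mi. Qed.

Lemma bigcap_some_norm_ge : \bigcap_(n : nat) some_norm_ge n%:R = set0.
Proof.
apply/seteqP; split => // t all_large.
pose n := (\sum_i Num.bound `|X i t|)%N.
have [i] := all_large n I.
apply/negP; rewrite -ltNge.
apply: lt_le_trans (archi_boundP (normr_ge0 _)) _.
by rewrite ler_nat /n (bigD1 i) //= leq_addr.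
Qed.

Lemma prob_some_norm_ge_small (P : probability T R) (e : R) : 0 < e ->
  \forall M \near +oo, (P (some_norm_ge M) <= e%:E)%E.
Proof.
move=> e_gt0.
have P_cvg0 : (P \o (fun n : nat => some_norm_ge n%:R)) @ \oo --> 0%E.
  rewrite -(measure0 P) -bigcap_some_norm_ge.
  apply: nonincreasing_cvg_mu => //.
  - by apply: le_lt_trans (probability_le1 P (measurable_some_norm_ge _)) _; rewrite ltry.
  - by move=> n; exact: measurable_some_norm_ge.
  - by rewrite bigcap_some_norm_ge.
  - by move=> m n mn; apply/subsetPset/some_norm_ge_anti; rewrite ler_nat.
have [n _ /(_ n (leqnn n)) Pn_small] :
    \forall n \near \oo, (P (some_norm_ge n%:R) <= e%:E)%E.
  apply: (P_cvg0 [set y | (y <= e%:E)%E]).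
  by change (\forall y \near 0%:E, (y <= e%:E)%E); rewrite nbhs_EFin; exact: nbhs0_ltW.
near=> M; apply: le_trans Pn_small.
apply: (le_measure P); rewrite ?inE; [exact: measurable_some_norm_ge..|].
by apply: some_norm_ge_anti; near: M; apply: nbhs_pinfty_ge; exact: num_real.
Unshelve. all: by end_near.
Qed.

End LargeNoise.

Theorem corollary1 (R : realType) (d : measure_display) (T : measurableType d)
    (P : probability T R) (k m N v L : nat) (p : {poly 'F_2})
    (g : 'I_N -> 'I_v.+1 -> bool) (x : 'I_(k + m) -> bool)
    (W : 'I_(k + m + v) * 'I_N -> {RV P >-> R}) :
  size p = m.+1 ->
  (0 < N)%N ->
  (exists j i, g j i) ->
  crc_ok p x ->
  mutually_independent P (fun ij t => W ij t) ->
  (forall ij (B : set R), measurable B ->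
     P (W ij @^-1` B) = normal_prob 0 (Num.sqrt (2^-1)) B) ->
  (0 < L)%N ->
  forall e : R, 0 < e ->
    \forall gam \near +oo%R,
      (P [set t | (L < N_LVA g p gam
                     (received g gam x (fun ij => W ij t)))%N]
       <= ((L%:R)^-1 + e)%:E)%E.
Proof.
move=> _ _ g_nz crc_x _ _ L_gt0 e e_gt0.
have mW ij : measurable_fun setT (W ij) by exact: measurable_funPT.
near=> gam.
set nack := [set t | _].
have m_nack : measurable nack.
  apply: measurable_N_LVA => t j.
  by apply: measurable_realfun.measurable_funD => //; exact: measurable_cst.
have nack_large_noise : nack `<=` some_norm_ge (X := fun ij t => W ij t) (amp gam).
  move=> t; apply: contraPP => /forallNP small_noise.
  rewrite /nack /= N_LVA_received_small_noise // => [|ij]; first by rewrite ltnNge L_gt0.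
  by rewrite ltNge; apply/negP/small_noise.
apply: le_trans (le_measure P (mem_set m_nack)
  (mem_set (measurable_some_norm_ge mW _)) nack_large_noise) _.
apply: (@le_trans _ _ e%:E); last by rewrite lee_fin lerDr invr_ge0.
near: gam; exact: amp_cvgy _ (prob_some_norm_ge_small mW P e e_gt0).
Unshelve. all: by end_near.
Qed.
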